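(* There exists a constant $\widehat c>0$ such that for all $N$ large enough and all $n\in\mathbb{Z}_+$, $$\|\check\pi-\zeta\|_{\mathrm{tv}}\le\frac{5\cdot 2^N n}{N!}+2e^{1-\widehat c n/N^3}.$$ Consequently $\limsup_{N\to\infty}\frac{1}{N\ln N}\ln\|\check\pi-\zeta\|_{\mathrm{tv}}\le -1$.
   Context: Let $\pi_N$ be the law of the number of fixed points of a uniform random permutation of $\{1,\dots,N\}$, $\check\pi$ the law $\pi_N$ conditioned on $\{0,\dots,N-4\}$, and $\zeta$ the Poisson law of parameter 1 conditioned on $\{0,\dots,N-4\}$. $\|\mu-\mu'\|_{\mathrm{tv}}=\sup_A|\mu(A)-\mu'(A)|$. *)

From HB Require Import structures.
From mathcomp Require Import all_boot all_order all_algebra all_fingroup.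
From mathcomp Require Import all_classical all_reals all_analysis.
Set Implicit Arguments. Unset Strict Implicit. Unset Printing Implicit Defensive.
Import Order.TTheory GRing.Theory Num.Theory.
Local Open Scope ring_scope.

(* number of fixed points of a permutation of {1..N} (represented as 'I_N) *)
Definition nfix (N : nat) (s : 'S_N) : nat := #|[set i | s i == i]|.

Definition piN (R : realType) (N : nat) (k : nat) : R :=
  #|[set s : 'S_N | nfix s == k]|%:R / (N`!)%:R.

Definition poisson1 (R : realType) (k : nat) : R := expR (-1) / (k`!)%:R.

Definition condlaw (R : realType) (M : nat) (mu : nat -> R) (k : nat) : R :=
  if (k < M)%N then mu k / (\sum_(j < M) mu j) else 0.

Definition massM (R : realType) (M : nat) (mu : nat -> R) (A : set nat) : R :=
  \sum_(k < M | `[< A k >]) mu k.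

Definition tvM (R : realType) (M : nat) (mu nu : nat -> R) : R :=
  sup [set `|massM M mu A - massM M nu A| | A in [set: set nat]].

(* check_pi = pi_N conditioned on {0,...,N-4}; zeta = Poisson(1) conditioned
   on {0,...,N-4}.  The set {0,...,N-4} is {k | k < N-3}. *)
Definition check_pi (R : realType) (N : nat) : nat -> R := condlaw (N - 3) (piN R N).
Definition zeta (R : realType) (N : nat) : nat -> R := condlaw (N - 3) (@poisson1 R).

From HB Require Import structures.
From mathcomp Require Import all_boot all_order all_algebra all_fingroup.
From mathcomp Require Import all_classical all_reals all_analysis.
From mathcomp Require Import ring lra zify.
Import Order.TTheory GRing.Theory Num.Theory.
Local Open Scope ring_scope.

(* 1. Exact law.  Counting pairs (s, T) with T a j-set of fixed points of s
      gives the factorial moments sum_s C(nfix s, j) = C(N, j) (N - j)!;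
      binomial inversion then yields pi_N(k) = E(N - k) / k!, where
      E(m) = sum_(i <= m) (-1)^i / i! is a partial sum of the series of 1/e.
   2. Alternating series.  |E(m') - E(m)| <= 1/(m+1)! and E(m) >= 1/3 for
      m >= 3.  Hence pi_N is l1-close to the weights E(N) / k!, with error
      at most sum_k 1/(k! (N+1-k)!) = 2^(N+1) / (N+1)!.
   3. Normalization.  Conditioning is normalization on {0, ..., N-4}, which
      at most doubles l1 distances relative to the normalizing mass; the
      Poisson weights are a rescaling of the weights E(N) / k!.  This gives
      tv <= 5 * 2^N / N! for N >= 6.
   4. The theorem: the first bound follows (with c = 1, using tv <= 1 when
      n = 0), and the rate follows from N^N <= e^N N!. *)

Lemma sum_by_value (T : finType) (f : T -> nat) (F : nat -> nat) n :
  (forall x, f x <= n)%N ->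
  (\sum_(x : T) F (f x) = \sum_(m < n.+1) #|[set x | f x == m]| * F m)%N.
Proof.
move=> f_le.
transitivity (\sum_(x : T) \sum_(m < n.+1) (f x == m) * F m)%N.
  apply: eq_bigr => x _; rewrite (bigD1 (Ordinal (f_le x : f x < n.+1)%N)) //=.
  rewrite eqxx mul1n big1 ?addn0 // => m /negPf.
  by rewrite eq_sym -(inj_eq val_inj) /= => ->.
rewrite exchange_big; apply: eq_bigr => m _; rewrite -big_distrl -sum1_card /=.
by congr (_ * _)%N; rewrite [RHS]big_mkcond; apply: eq_bigr => x _; rewrite inE.
Qed.

(* The j-th factorial moment of the number of fixed points: counting pairs
   (s, T) with T a j-set of fixed points of s, by T first. *)
Lemma sum_binom_nfix N j :
  (\sum_(s : 'S_N) 'C(nfix s, j) = 'C(N, j) * (N - j)`!)%N.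
Proof.
have fixes_on s (T : {set 'I_N}) :
    (s \in perm_on (~: T)) = (T \subset [set i | s i == i]).
  apply/idP/idP => [s_on | /fintype.subsetP sub].
    apply/fintype.subsetP => x xT; rewrite inE; apply/eqP.
    by apply: (out_perm s_on); rewrite inE xT.
  apply/fintype.subsetP => x; rewrite !inE; apply: contraNN => xT.
  by have := sub x xT; rewrite inE.
transitivity (\sum_(T : {set 'I_N} | #|T| == j)
                \sum_(s : 'S_N) (T \subset [set i | s i == i]) : nat)%N.
  rewrite exchange_big /=; apply: eq_bigr => s _.
  rewrite /nfix -cards_draws -sum1_card big_mkcond [RHS]big_mkcond /=.
  by apply: eq_bigr => T _; rewrite inE andbC; case: (_ \subset _); case: (_ == _).
transitivity (\sum_(T : {set 'I_N} | #|T| == j) (N - j)`!)%N.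
  apply: eq_bigr => T /eqP <-.
  have -> : (N - #|T| = #|~: T|)%N.
    by have := cardsC T; rewrite card_ord => def_N; rewrite -{1}def_N addKn.
  rewrite -card_perm -sum1_card.
  by rewrite [RHS]big_mkcond; apply: eq_bigr => s _; rewrite fixes_on.
rewrite sum_nat_const; congr (_ * _)%N.
by have := card_draws 'I_N j; rewrite card_ord => <-; apply: eq_card => T; rewrite inE.
Qed.

Lemma fixed_point_moments N j :
  (\sum_(m < N.+1) #|[set s : 'S_N | nfix s == m]| * 'C(m, j)
     = 'C(N, j) * (N - j)`!)%N.
Proof.
rewrite -sum_binom_nfix (@sum_by_value _ (@nfix N) (fun m => 'C(m, j)) N) // => s.
by rewrite -[X in (_ <= X)%N](card_ord N); apply: max_card.
Qed.

Lemma sum_window (V : nmodType) (F : nat -> V) n k m :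
  (k <= m < n)%N -> (forall j, (j < n)%N -> (j < k)%N || (m < j)%N -> F j = 0) ->
  \sum_(j < n) F j = \sum_(i < (m - k).+1) F (k + i)%N.
Proof.
move=> /andP[km mn] F0.
rewrite -!(big_mkord xpredT) (big_cat_nat (leq0n k)) /=; last by lia.
rewrite big1_seq ?add0r; last first.
  move=> j; rewrite andTb mem_index_iota => /andP[_ jk]; apply: F0; rewrite ?jk //; lia.
rewrite (@big_cat_nat _ _ _ m.+1 k n) //=; last by lia.
rewrite [X in _ + X]big1_seq ?addr0; last first.
  by move=> j; rewrite andTb mem_index_iota => /andP[mj jn]; apply: F0; rewrite ?mj ?orbT.
by rewrite -{1}(add0n k) big_addn subSn // big_mkord; apply: eq_bigr => i _; rewrite addnC.
Qed.

(* Choosing a j-subset of an m-set and then a k-subset of it. *)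
Lemma bin_bin m j k : (k <= j <= m)%N ->
  ('C(m, j) * 'C(j, k) = 'C(m, k) * 'C(m - k, j - k))%N.
Proof.
move=> /andP[kj jm]; have km : (k <= m)%N by apply: leq_trans jm.
have facts_gt0 : (0 < k`! * (j - k)`! * (m - j)`!)%N by rewrite !muln_gt0 !fact_gt0.
apply/eqP; rewrite -(eqn_pmul2r facts_gt0); apply/eqP.
have jk_mk : (j - k <= m - k)%N by rewrite leq_sub2r.
have := bin_fact jk_mk; rewrite subnBA // subnK // => fact_mk.
have lhs : ('C(m, j) * 'C(j, k) * (k`! * (j - k)`! * (m - j)`!) = m`!)%N.
  by rewrite -(bin_fact jm) -(bin_fact kj); ring.
have rhs : ('C(m, k) * 'C(m - k, j - k) * (k`! * (j - k)`! * (m - j)`!) = m`!)%N.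
  by rewrite -(bin_fact km) -fact_mk; ring.
by rewrite lhs rhs.
Qed.

Section BinomialInversion.
Variable R : comPzRingType.

Lemma sum_sign_bin n : \sum_(i < n.+1) (-1) ^+ i * ('C(n, i))%:R = (n == 0)%:R :> R.
Proof.
under eq_bigr do rewrite mulr_natr.
by rewrite -exprD1n addNr expr0n.
Qed.

Lemma bin_orthogonality n m k : (m <= n)%N -> (k <= n)%N ->
  \sum_(j < n.+1) (-1) ^+ (j + k) * ('C(j, k))%:R * ('C(m, j))%:R
    = (m == k)%:R :> R.
Proof.
move=> mn kn; have [mk | km] := ltnP m k.
  rewrite (ltn_eqF mk) big1 // => j _; have [jm | mj] := leqP j m.
    by rewrite bin_small ?mulr0 ?mul0r //; apply: leq_ltn_trans mk.
  by rewrite (bin_small mj) mulr0.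
rewrite (@sum_window _
  (fun j => (-1) ^+ (j + k) * ('C(j, k))%:R * ('C(m, j))%:R) n.+1 k m); last 2 first.
- by rewrite km ltnS.
- move=> j _ /orP[jk | mj]; first by rewrite (bin_small jk) mulr0 mul0r.
  by rewrite (bin_small mj) mulr0.
rewrite (eq_bigr (fun i : 'I_(m - k).+1 =>
  ('C(m, k))%:R * ((-1) ^+ i * ('C(m - k, i))%:R))); last first.
  move=> i _; have ikm : (k + i <= m)%N by rewrite -leq_subRL // -ltnS.
  rewrite -signr_odd addnAC addnn oddD odd_double /= signr_odd.
  by rewrite -mulrA -natrM mulnC bin_bin ?leq_addr ?ikm // addKn natrM; ring.
rewrite -mulr_sumr sum_sign_bin subn_eq0 eqn_leq km andbT.
have [mk | _] := boolP (m <= k)%N; last by rewrite mulr0.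
have -> : m = k by apply/eqP; rewrite eqn_leq mk km.
by rewrite binn mulr1.
Qed.

Lemma binomial_inversion n (g a : nat -> R) :
  (forall j, a j = \sum_(m < n.+1) g m * ('C(m, j))%:R) ->
  forall k, (k <= n)%N ->
  g k = \sum_(j < n.+1) (-1) ^+ (j + k) * ('C(j, k))%:R * a j.
Proof.
move=> a_def k kn.
transitivity (\sum_(m < n.+1) g m * (m == k :> nat)%:R).
  rewrite (bigD1 (Ordinal (kn : k < n.+1)%N)) //= eqxx mulr1 big1 ?addr0 // => m.
  by move=> /negPf; rewrite -(inj_eq val_inj) /= => ->; rewrite mulr0.
under [RHS]eq_bigr do rewrite a_def mulr_sumr.
rewrite exchange_big /=; apply: eq_bigr => m _.
rewrite -(@bin_orthogonality n m k) ?(ltnSE (ltn_ord m)) // mulr_sumr.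
by apply: eq_bigr => j _; ring.
Qed.

End BinomialInversion.

Lemma alternating_sum_bounds (F : realDomainType) n (t : nat -> F) :
  (forall i, 0 <= t i) -> (forall i, t i.+1 <= t i) ->
  0 <= \sum_(i < n) (-1) ^+ i * t i <= t 0%N /\
  ((0 < n)%N -> t 0%N - t 1%N <= \sum_(i < n) (-1) ^+ i * t i).
Proof.
elim: n t => [|n IH] t t_ge0 t_dec; first by rewrite big_ord0 lexx t_ge0.
have [/andP[lo hi] _] := IH (fun i => t i.+1) (fun i => t_ge0 i.+1) (fun i => t_dec i.+1).
rewrite big_ord_recl expr0 mul1r.
under eq_bigr do rewrite /bump /= exprS mulN1r mulNr.
rewrite sumrN; split; last by lra.
by have := t_dec 0%N; lra.
Qed.

Lemma pow2_le_fact c n0 n : (0 < n0)%N -> (c * 2 ^ n0 <= n0`!)%N -> (n0 <= n)%N ->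
  (c * 2 ^ n <= n`!)%N.
Proof.
move=> n0_gt0 base; elim: n => [|n IH]; first by rewrite leqn0 => /eqP n0_eq0; lia.
rewrite leq_eqVlt => /orP[/eqP <- // | n0_le_n].
by rewrite expnS mulnCA factS; apply: leq_mul; [lia | exact: IH].
Qed.

Section FixedPointLaw.
Variable R : realType.

Definition partial_em1 (m : nat) : R := \sum_(i < m.+1) (-1) ^+ i / (i`!)%:R.

Lemma fact_gt0R n : 0 < (n`!)%:R :> R.
Proof. by rewrite ltr0n fact_gt0. Qed.

Lemma piN_partial_em1 N k : (k <= N)%N ->
  piN R N k = partial_em1 (N - k) / (k`!)%:R.
Proof.
move=> kN; set g := fun m => (#|[set s : 'S_N | nfix s == m]|)%:R : R.
have moments j : ('C(N, j) * (N - j)`!)%:R = \sum_(m < N.+1) g m * ('C(m, j))%:R.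
  by rewrite -fixed_point_moments natr_sum; apply: eq_bigr => m _; rewrite natrM.
have coef j : (j <= N)%N -> ('C(N, j) * (N - j)`!)%:R / (N`!)%:R = (j`!)%:R^-1 :> R.
  move=> jN; rewrite -(bin_fact jN) !natrM.
  have := fact_gt0R j; have := fact_gt0R (N - j).
  have : 0 < ('C(N, j))%:R :> R by rewrite ltr0n bin_gt0.
  by move=> *; field; rewrite !gt_eqF.
rewrite /piN -/(g k) (@binomial_inversion R N g _ moments k kN) mulr_suml.
rewrite (eq_bigr (fun j : 'I_N.+1 => (-1) ^+ (j + k) * ('C(j, k))%:R / (j`!)%:R));
  last by move=> j _; rewrite -(coef j (ltnSE (ltn_ord j))) mulrA.
rewrite (@sum_window _ (fun j => (-1) ^+ (j + k) * ('C(j, k))%:R / (j`!)%:R) N.+1 k N);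
  last 2 first.
- by rewrite kN ltnSn.
- move=> j jN /orP[jk | ]; first by rewrite bin_small ?mulr0 ?mul0r.
  by rewrite ltnNge -ltnS jN.
rewrite /partial_em1 mulr_suml; apply: eq_bigr => i _.
rewrite -signr_odd addnAC addnn oddD odd_double /= signr_odd.
have := bin_fact (leq_addr i k); rewrite addKn => <-; rewrite !natrM.
have := fact_gt0R k; have := fact_gt0R i.
have : 0 < ('C(k + i, k))%:R :> R by rewrite ltr0n bin_gt0 leq_addr.
by move=> *; field; rewrite !gt_eqF.
Qed.

Lemma inv_fact_ge0 n : 0 <= (n`!)%:R^-1 :> R.
Proof. by rewrite invr_ge0 ltW ?fact_gt0R. Qed.

Lemma inv_fact_shift_dec a i : (((i + a).+1)`!)%:R^-1 <= ((i + a)`!)%:R^-1 :> R.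
Proof. by rewrite lef_pV2 ?posrE ?fact_gt0R // ler_nat factS leq_pmull. Qed.

Lemma partial_em1_tail m m' : (m <= m')%N ->
  `|partial_em1 m' - partial_em1 m| <= ((m.+1)`!)%:R^-1.
Proof.
move=> mm'; rewrite /partial_em1 -!(big_mkord xpredT (fun i => (-1) ^+ i / (i`!)%:R)).
rewrite (@big_cat_nat _ _ _ m.+1 0 m'.+1) //= addrAC subrr add0r.
rewrite -{1}(add0n m.+1) big_addn big_mkord.
rewrite (eq_bigr (fun i : 'I_(m'.+1 - m.+1) =>
  (-1) ^+ m.+1 * ((-1) ^+ i * ((i + m.+1)`!)%:R^-1))); last first.
  by move=> i _; rewrite exprD; ring.
rewrite -mulr_sumr normrM normrX normrN1 expr1n mul1r.
have [/andP[tail_ge0 tail_le] _] := @alternating_sum_bounds R (m'.+1 - m.+1)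
  (fun i => ((i + m.+1)`!)%:R^-1) (fun i => inv_fact_ge0 (i + m.+1))
  (fun i => inv_fact_shift_dec m.+1 i).
by rewrite ger0_norm.
Qed.

(* From the third partial sum on, partial_em1 stays above 1/2 - 1/6 = 1/3. *)
Lemma partial_em1_ge m : 3^-1 <= partial_em1 m.+3.
Proof.
rewrite /partial_em1 big_ord_recl big_ord_recl /=.
rewrite (eq_bigr (fun i : 'I_m.+2 => (-1) ^+ i * ((i + 2)`!)%:R^-1)); last first.
  by move=> i _; rewrite /bump /= !add1n !exprS addn2; ring.
have [_ lower] := @alternating_sum_bounds R m.+2
  (fun i => ((i + 2)`!)%:R^-1) (fun i => inv_fact_ge0 (i + 2))
  (fun i => inv_fact_shift_dec 2 i).
have := lower isT; rewrite /= !expr0 !expr1.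
rewrite (_ : (2`!)%:R = 2 :> R) // (_ : (3`!)%:R = 6 :> R) // (_ : (1`!)%:R = 1 :> R) //.
rewrite !divr1 => lower_bound.
have : 2^-1 - 6^-1 = 3^-1 :> R by field.
lra.
Qed.

Lemma tvM_le_l1 M (mu nu : nat -> R) : tvM M mu nu <= \sum_(k < M) `|mu k - nu k|.
Proof.
rewrite /tvM; apply: ge_sup; first by exists `|massM M mu set0 - massM M nu set0|, set0.
move=> _ [A _ <-]; rewrite /massM -sumrB; apply: le_trans (ler_norm_sum _ _ _) _.
rewrite [X in _ <= X](bigID (fun k : 'I_M => `[< A k >])) /= lerDl.
by apply: sumr_ge0 => k _.
Qed.

Lemma condlaw_scale M (mu : nat -> R) l : l != 0 ->
  condlaw M (fun k => l * mu k) = condlaw M mu.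
Proof.
move=> l0; apply: funext => k; rewrite /condlaw; case: ifP => // _; rewrite -mulr_sumr.
have [-> | mu_ne0] := eqVneq (\sum_(j < M) mu j) 0; first by rewrite mulr0 !invr0 !mulr0.
by field; rewrite l0 mu_ne0.
Qed.

Lemma l1_condlaw M (a b : nat -> R) :
  0 < \sum_(k < M) a k -> 0 < \sum_(k < M) b k -> (forall k, 0 <= b k) ->
  \sum_(k < M) `|condlaw M a k - condlaw M b k|
    <= 2 * (\sum_(k < M) `|a k - b k|) / \sum_(k < M) a k.
Proof.
set A := \sum_(k < M) a k; set B := \sum_(k < M) b k.
set d := \sum_(k < M) `|a k - b k| => A_gt0 B_gt0 b_ge0.
have mass_diff : `|B - A| <= d.
  rewrite /B /A -sumrB; apply: le_trans (ler_norm_sum _ _ _) _.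
  by apply: ler_sum => k _; rewrite distrC.
have termwise (k : 'I_M) : `|condlaw M a k - condlaw M b k|
    <= `|a k - b k| / A + b k * (`|B - A| / (A * B)).
  rewrite /condlaw ltn_ord -/A -/B.
  have -> : a k / A - b k / B = (a k - b k) / A + b k * ((B - A) / (A * B)).
    by field; rewrite !gt_eqF.
  apply: le_trans (ler_normD _ _) _; rewrite !normrM (ger0_norm (b_ge0 k)).
  have invA_ge0 : 0 <= A^-1 by rewrite invr_ge0 ltW.
  have invAB_ge0 : 0 <= (A * B)^-1 by rewrite invr_ge0 mulr_ge0 // ltW.
  by rewrite (ger0_norm invA_ge0) (ger0_norm invAB_ge0).
apply: le_trans (ler_sum _ (fun k _ => termwise k)) _.
rewrite big_split /= -!mulr_suml -/d -/B.
have -> : d / A + B * (`|B - A| / (A * B)) = (d + `|B - A|) / A.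
  by field; rewrite !gt_eqF.
by rewrite ler_pM2r ?invr_gt0 //; lra.
Qed.

(* sum_k 1 / (k! (n - k)!) = 2^n / n!, i.e. the binomial theorem at 1 + 1. *)
Lemma sum_inv_fact_pairs n :
  \sum_(k < n.+1) (k`!)%:R^-1 * ((n - k)`!)%:R^-1 = 2 ^+ n / (n`!)%:R :> R.
Proof.
have := exprD1n (1 : R) n; rewrite (_ : 1 + 1 = 2 :> R) // => ->; rewrite mulr_suml.
apply: eq_bigr => k _; rewrite expr1n -(bin_fact (ltnSE (ltn_ord k))) !natrM.
have := fact_gt0R k; have := fact_gt0R (n - k).
have : 0 < ('C(n, k))%:R :> R by rewrite ltr0n bin_gt0 -ltnS.
by move=> *; field; rewrite !gt_eqF.
Qed.

Lemma piN_l1_poisson N M : (M <= N.+1)%N ->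
  \sum_(k < M) `|piN R N k - partial_em1 N / (k`!)%:R| <= 2 ^+ N.+1 / (N.+1`!)%:R.
Proof.
move=> MN; set t := fun k => (k`!)%:R^-1 * ((N.+1 - k)`!)%:R^-1 : R.
have termwise (k : 'I_M) : `|piN R N k - partial_em1 N / (k`!)%:R| <= t k.
  have kN : (k <= N)%N by have := ltn_ord k; lia.
  rewrite piN_partial_em1 // -mulrBl normrM mulrC ger0_norm ?inv_fact_ge0 //.
  rewrite ler_wpM2l ?inv_fact_ge0 // distrC (_ : (N.+1 - k)%N = (N - k).+1); last by lia.
  exact: partial_em1_tail (leq_subr k N).
apply: le_trans (ler_sum _ (fun k _ => termwise k)) _.
rewrite -sum_inv_fact_pairs (big_ord_widen N.+2 t (leqW MN)) big_mkcond /=.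
by apply: ler_sum => k _; case: ifP.
Qed.

(* Both conditioned laws are normalizations of pi_N and of the weights
   b k = partial_em1 N / k!, which are l1-close to pi_N; the mass of pi_N on
   {0, ..., N-4} is bounded below by 1/3 - 1/12. *)
Lemma tv_check_pi_le N : (6 <= N)%N ->
  tvM (N - 3) (check_pi R N) (zeta R N) <= 8 * (2 ^+ N.+1 / (N.+1`!)%:R).
Proof.
move=> N6; set M := (N - 3)%N; set c := partial_em1 N.
set u := 2 ^+ N.+1 / (N.+1`!)%:R; set b := fun k => c / (k`!)%:R.
have u_small : u <= 12^-1.
  have := @pow2_le_fact 12 7 N.+1 isT isT N6; rewrite -(ler_nat R) natrM natrX => big.
  by rewrite ler_pdivrMr ?fact_gt0R //; lra.
have c_ge : 3^-1 <= c by have := partial_em1_ge (N - 3); rewrite (_ : (N - 3).+3 = N) //; lia.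
have b_ge0 k : 0 <= b k by rewrite mulr_ge0 ?inv_fact_ge0 //; lra.
have d_le : \sum_(k < M) `|piN R N k - b k| <= u by apply: piN_l1_poisson; lia.
have B_ge : 3^-1 <= \sum_(k < M) b k.
  rewrite /M (_ : (N - 3)%N = (N - 4).+1); last by lia.
  by rewrite big_ord_recl -[X in X <= _]addr0 lerD // ?sumr_ge0 // /b divr1.
have A_ge : 4^-1 <= \sum_(k < M) piN R N k.
  have : `|\sum_(k < M) b k - \sum_(k < M) piN R N k| <= u.
    rewrite -sumrB; apply: le_trans (ler_norm_sum _ _ _) (le_trans _ d_le).
    by apply: ler_sum => k _; rewrite distrC.
  by rewrite ler_norml => /andP[_ diff_le]; lra.
have zeta_b : zeta R N = condlaw M b.
  rewrite /zeta /b /poisson1 -/M (@condlaw_scale M (fun k => (k`!)%:R^-1) c).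
    exact: (@condlaw_scale M (fun k => (k`!)%:R^-1) _ (lt0r_neq0 (expR_gt0 (-1)))).
  by apply: lt0r_neq0; lra.
rewrite /check_pi zeta_b; apply: le_trans (tvM_le_l1 _ _ _) _.
have A_gt0 : 0 < \sum_(k < M) piN R N k by lra.
have B_gt0 : 0 < \sum_(k < M) b k by lra.
apply: le_trans (@l1_condlaw M (piN R N) b A_gt0 B_gt0 b_ge0) _.
rewrite ler_pdivrMr //.
have : 0 <= \sum_(k < M) `|piN R N k - b k| by apply: sumr_ge0.
have : 0 <= u by rewrite divr_ge0 ?exprn_ge0 // ltW ?fact_gt0R.
nra.
Qed.

Lemma tv_check_pi_le_rate N : (6 <= N)%N ->
  tvM (N - 3) (check_pi R N) (zeta R N) <= 5 * 2 ^+ N / (N`!)%:R.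
Proof.
move=> N6; apply: le_trans (@tv_check_pi_le N N6) _.
have N7 : 7 <= (N.+1)%:R :> R by rewrite ler_nat.
have fact_gt0 := fact_gt0R N.
have -> : 8 * (2 ^+ N.+1 / (N.+1`!)%:R) = 16 / (N.+1)%:R * (2 ^+ N / (N`!)%:R) :> R.
  by rewrite exprS factS natrM; field; rewrite !gt_eqF //; lra.
by rewrite -[5 * _ / _]mulrA ler_pM2r ?divr_gt0 ?exprn_gt0 // ler_pdivrMr; lra.
Qed.

Lemma rate_le1 N : (6 <= N)%N -> 5 * 2 ^+ N / (N`!)%:R <= 1 :> R.
Proof.
move=> N6; have := @pow2_le_fact 5 6 N isT isT N6.
by rewrite -(ler_nat R) natrM natrX => H; rewrite ler_pdivrMr ?fact_gt0R // mul1r.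
Qed.

(* N^N <= e^N N!, from the N-th term of the exponential series. *)
Lemma pow_le_expR_fact N : (N%:R) ^+ N <= expR N%:R * (N`!)%:R :> R.
Proof.
case: N => [|N]; first by rewrite expr0 expR0 mul1r.
rewrite -ler_pdivrMr ?fact_gt0R //; apply: le_trans (expR_ge1Dxn N (ler0n R N.+1)).
by rewrite lerDr.
Qed.

Lemma rate_decay eps : 0 < eps -> exists N0, forall N, (N0 <= N)%N ->
  5 * 2 ^+ N / (N`!)%:R <= expR ((-1 + eps) * (N%:R * ln N%:R)) :> R.
Proof.
move=> eps_gt0; exists (maxn 6 (Num.truncn (expR (6 / eps))).+1) => N.
rewrite geq_max => /andP[N6 N_large]; set x := N%:R : R.
have x6 : 6 <= x by rewrite /x ler_nat.
have ln_x : 6 <= eps * ln x.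
  rewrite -ler_pdivrMl // mulrC -ler_expR lnK ?posrE; last by lra.
  by apply: ltW; apply: lt_le_trans (truncnS_gt _) _; rewrite /x ler_nat.
have fact_gt0 := fact_gt0R N.
have rate_gt0 : 0 < 5 * 2 ^+ N / (N`!)%:R :> R by rewrite divr_gt0 ?mulr_gt0 ?exprn_gt0.
rewrite -(lnK rate_gt0) ler_expR.
rewrite !lnM ?posrE ?mulr_gt0 ?exprn_gt0 ?invr_gt0 // lnV ?posrE // lnXn //.
rewrite -[ln 2 *+ N]mulr_natl -/x.
(* ln 5 + N ln 2 - ln N! <= 5 + 2N + N - N ln N <= (-1 + eps) N ln N *)
have stirling : x * ln x <= x + ln (N`!)%:R.
  rewrite {1}/x mulr_natl -lnXn; last by lra.
  rewrite -[x in x + _]expRK -lnM ?posrE ?expR_gt0 // ler_ln ?posrE ?mulr_gt0 ?expR_gt0 //.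
    exact: pow_le_expR_fact.
  by rewrite exprn_gt0 //; lra.
have ln5 : ln 5 < 5 :> R by apply: ln_sublinear.
have ln2 : ln 2 < 2 :> R by apply: ln_sublinear.
have x_gt0 : 0 < x by lra.
have x_eps : 6 * x <= x * (eps * ln x) by rewrite mulrC ler_pM2l.
have -> : (-1 + eps) * (x * ln x) = x * (eps * ln x) - x * ln x by ring.
have : x * ln 2 <= x * 2 by rewrite ler_pM2l // ltW.
lra.
Qed.

End FixedPointLaw.

Theorem mainTheorem12 (R : realType) :
  (exists chat : R, 0 < chat /\
     exists N0 : nat, forall N : nat, (N0 <= N)%N -> forall n : nat,
       tvM (N - 3) (check_pi R N) (zeta R N)
         <= (5 * 2 ^+ N * n%:R) / (N`!)%:R
            + 2 * expR (1 - chat * n%:R / (N%:R ^+ 3))) /\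
  (forall eps : R, 0 < eps ->
     exists N0 : nat, forall N : nat, (N0 <= N)%N ->
       tvM (N - 3) (check_pi R N) (zeta R N)
         <= expR ((-1 + eps) * (N%:R * ln (N%:R)))).
Proof.
split.
  (* c = 1 works: for n = 0 use tv <= 1 <= 2e, for n > 0 the first term. *)
  exists 1; split; first exact: ltr01.
  exists 6%N => N N6 n; have tv_le := @tv_check_pi_le_rate R N N6.
  have exp_ge0 := expR_ge0 (1 - 1 * n%:R / N%:R ^+ 3 : R).
  case: n exp_ge0 => [|n] exp_ge0.
    have e_ge1 : 1 <= expR (1 : R) by have := expR_ge1Dx (1 : R); lra.
    by rewrite !mulr0 !mul0r subr0 add0r; have := @rate_le1 R N N6; lra.
  have : 5 * 2 ^+ N / (N`!)%:R <= 5 * 2 ^+ N * n.+1%:R / (N`!)%:R :> R.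
    rewrite [X in _ <= X]mulrAC; apply: ler_peMr; last by rewrite ler1n.
    by rewrite divr_ge0 ?mulr_ge0 ?exprn_ge0 ?ltW ?fact_gt0R.
  lra.
move=> eps eps_gt0; have [N1 decay] := @rate_decay R eps eps_gt0.
exists (maxn 6 N1) => N; rewrite geq_max => /andP[N6 N1N].
exact: le_trans (@tv_check_pi_le_rate R N N6) (decay N N1N).
Qed.
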